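(* Let $A$ be a finite set, let $\overset{*}{<}=(\overset{x}{<},\overset{y}{<})$ be a regular double order on $A$ and let $\sigma\in\Sigma_A$. Then $\overset{*}{<}\bar\cup\,(\overset{*}{<}\sigma)$ is a double order if and only if $\sigma$ is the identity.
   Context: A strict partial order is a transitive irreflexive relation; it is semi-linear if it is induced by a surjection $h:A\to\{1,\dots,l\}$ (i.e. $a<b$ iff $h(a)<h(b)$). For strict partial orders $<_1,<_2$, $<_1\bar\cup<_2$ denotes the transitive closure of their union. A double order on $A$ is a pair $(\overset{x}{<},\overset{y}{<})$ of strict partial orders on $A$ such that for all $a\ne b$ at least one of $a\overset{x}{<}b$, $b\overset{x}{<}a$, $a\overset{y}{<}b$, $b\overset{y}{<}a$ holds. It is regular if $\overset{x}{<}$ is semi-linear and $a\overset{x}{<}b$ implies neither $a\overset{y}{<}b$ nor $b\overset{y}{<}a$. For double orders $\overset{*}{<}_1,\overset{*}{<}_2$, the union $\overset{*}{<}_1\bar\cup\overset{*}{<}_2=(\overset{x}{<}_1\bar\cup\overset{x}{<}_2,\overset{y}{<}_1\bar\cup\overset{y}{<}_2)$; it is a double order exactly when both components are irreflexive. $\Sigma_A$ acts on the right by $(\overset{x}{<},\overset{y}{<})\sigma=(\overset{x}{<}\sigma,\overset{y}{<}\sigma)$, where $a(\overset{x}{<}\sigma)b$ iff $\sigma(a)\overset{x}{<}\sigma(b)$, and similarly for $y$. *)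

From mathcomp Require Import all_boot all_fingroup.
From Stdlib Require Import Relations.
Set Implicit Arguments. Unset Strict Implicit. Unset Printing Implicit Defensive.

Section DoubleOrders.
Variable A : finType.

Definition relA := A -> A -> Prop.

Definition strict_po (r : relA) : Prop :=
  (forall a, ~ r a a) /\ (forall a b c, r a b -> r b c -> r a c).

Definition semilinear (r : relA) : Prop :=
  exists (l : nat) (h : A -> nat),
    (forall a, 1 <= h a <= l) /\
    (forall k, 1 <= k <= l -> exists a, h a = k) /\
    (forall a b, r a b <-> h a < h b).

Definition tc_union (r1 r2 : relA) : relA :=
  clos_trans A (fun a b => r1 a b \/ r2 a b).

Definition double_order (rx ry : relA) : Prop :=
  strict_po rx /\ strict_po ry /\
  (forall a b, a <> b -> rx a b \/ rx b a \/ ry a b \/ ry b a).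

Definition regular_double_order (rx ry : relA) : Prop :=
  double_order rx ry /\ semilinear rx /\
  (forall a b, rx a b -> ~ ry a b /\ ~ ry b a).

(* right action of a permutation: a (r sigma) b iff sigma a r sigma b *)
Definition perm_act (r : relA) (s : {perm A}) : relA :=
  fun a b => r (s a) (s b).

End DoubleOrders.

(** Irreflexivity of the two unions says exactly that σ never reverses a strict
    x- or y-comparison.  A permutation of a finite total preorder that never
    reverses a strict comparison maps each down-set D onto itself: one of the
    inclusions σ⁻¹D ⊆ D, D ⊆ σ⁻¹D always holds, and equal cardinalities turn it
    into an equality; hence σ fixes every equivalence class.  Applied to the
    x-levels this shows that σ preserves levels; applied to the linear order
    "by x-level, then by y within a level" it forces σ = id.  Conversely, for
    σ = id both unions collapse to the original orders. *)

From Stdlib Require Import Relations.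
From mathcomp Require Import boolp.
From mathcomp Require Import all_boot all_fingroup.

Set Implicit Arguments.
Unset Strict Implicit.
Unset Printing Implicit Defensive.

Lemma preimset_inj_eq (T : finType) (f : T -> T) (X : {set T}) :
  injective f -> (f @^-1: X \subset X) || (X \subset f @^-1: X) ->
  f @^-1: X = X.
Proof.
move=> f_inj /orP[sub|sub].
- by apply/setP/(subset_cardP (card_preimset X f_inj)).
- by apply/esym/setP/(subset_cardP (esym (card_preimset X f_inj))).
Qed.

Section PermTotalPreorder.
Variables (T : finType) (R : rel T) (s : {perm T}).
Hypotheses (R_trans : transitive R) (R_total : total R).
Hypothesis s_homo : forall a b, ~~ R b a -> R (s a) (s b).

Lemma perm_downset_stable c x : R (s x) c = R x c.
Proof.
set X := [set a | R a c].
suff /setP/(_ x) : s @^-1: X = X by rewrite !inE.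
apply: preimset_inj_eq; first exact: perm_inj.
case: (boolP (X \subset s @^-1: X)) => [_|/subsetPn[a]]; first by rewrite orbT.
rewrite !inE => Rac nRsac; apply/orP; left.
apply/subsetP => b; rewrite !inE => Rsbc; apply/negPn/negP => nRbc.
have nRba : ~~ R b a by apply: contra nRbc => Rba; exact: R_trans Rba Rac.
by move: nRsac; rewrite (R_trans (s_homo nRba) Rsbc).
Qed.

Lemma perm_preorder_equiv a : R a (s a) && R (s a) a.
Proof.
have R_refl x : R x x by have := R_total x x; rewrite orbb.
by rewrite -(perm_downset_stable (s a) a) (perm_downset_stable a a) !R_refl.
Qed.

Lemma perm_order_fix : antisymmetric R -> forall a, s a = a.
Proof. by move=> R_anti a; apply/esym/R_anti/perm_preorder_equiv. Qed.

End PermTotalPreorder.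

Lemma tc_union_irreflexive_no_reversal (A : finType) (r : A -> A -> Prop)
    (s : {perm A}) :
  (forall a, ~ tc_union r (perm_act r s) a a) ->
  forall a b, r a b -> ~ r (s b) (s a).
Proof.
move=> irr a b rab rsba; apply: (irr a).
by apply: (@t_trans _ _ a b a); apply: t_step; [left | right].
Qed.

Lemma tc_union_perm1 (A : finType) (r : A -> A -> Prop) :
  (forall a b c, r a b -> r b c -> r a c) -> tc_union r (perm_act r 1%g) = r.
Proof.
move=> r_trans; rewrite predeq2E => a b; split.
- elim=> [x y [|] | x y z _ rxy _ ryz]; rewrite /perm_act ?perm1 //.
  exact: r_trans rxy ryz.
- by move=> rab; apply: t_step; left.
Qed.

Section LevelledOrder.
Variables (A : finType) (h : A -> nat) (ry : A -> A -> Prop) (s : {perm A}).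
Hypothesis ry_po : strict_po ry.
Hypothesis ry_total_level : forall a b, a <> b -> h a = h b -> ry a b \/ ry b a.
Hypothesis s_level : forall a b, h a < h b -> h (s a) <= h (s b).
Hypothesis s_ry : forall a b, ry a b -> ~ ry (s b) (s a).

Lemma level_perm a : h (s a) = h a.
Proof.
have s_homo x y : ~~ (h y <= h x) -> h (s x) <= h (s y).
  by rewrite -ltnNge; apply: s_level.
have := perm_preorder_equiv (R := [rel x y | h x <= h y])
  (fun y x z => @leq_trans (h y) (h x) (h z)) (fun x y => leq_total (h x) (h y))
  s_homo a.
by rewrite /= -eqn_leq => /eqP.
Qed.

Definition lex_le : rel A :=
  fun a b => (h a < h b) || (h a == h b) && ((a == b) || `[< ry a b >]).

Lemma lex_le_trans : transitive lex_le.
Proof.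
move=> y x z /orP[lxy|/andP[/eqP exy Rxy]] /orP[lyz|/andP[/eqP eyz Ryz]].
- by rewrite /lex_le (ltn_trans lxy lyz).
- by rewrite /lex_le -eyz lxy.
- by rewrite /lex_le exy lyz.
rewrite /lex_le exy eyz eqxx ltnn /=.
case/orP: Rxy => [/eqP-> //|/asboolP rxy]; case/orP: Ryz => [/eqP<-|/asboolP ryz].
  by apply/orP; right; apply/asboolP.
by apply/orP; right; apply/asboolP; exact: ry_po.2 _ _ _ rxy ryz.
Qed.

Lemma lex_le_total : total lex_le.
Proof.
move=> x y; rewrite /lex_le; case: (ltngtP (h x) (h y)) => //= hxy.
case: (eqVneq x y) => [-> // | /eqP nxy].
by case: (ry_total_level nxy hxy) => /asboolP ->; rewrite !orbT.
Qed.

Lemma lex_le_anti : antisymmetric lex_le.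
Proof.
move=> x y; rewrite /lex_le; case: (ltngtP (h x) (h y)) => //= _.
case/andP=> /orP[/eqP-> //|/asboolP rxy] /orP[/eqP-> //|/asboolP ryx].
by case: (ry_po.1 x); exact: ry_po.2 _ _ _ rxy ryx.
Qed.

Lemma lex_le_perm_homo a b : ~~ lex_le b a -> lex_le (s a) (s b).
Proof.
move=> nba; have := lex_le_total a b; rewrite (negbTE nba) orbF.
rewrite /lex_le !level_perm => /orP[-> // | /andP[/eqP hab ab_ry]].
rewrite hab eqxx ltnn /=.
case/orP: ab_ry => [/eqP-> | /asboolP ryab]; first by rewrite eqxx.
apply/orP; right; apply/asboolP.
have nsab : s a <> s b.
  by move=> /perm_inj eab; apply: (ry_po.1 a); rewrite {2}eab.
have hsab : h (s a) = h (s b) by rewrite !level_perm.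
by case: (ry_total_level nsab hsab) => // /(s_ry ryab).
Qed.

Lemma non_reversing_perm_fix a : s a = a.
Proof.
exact: perm_order_fix lex_le_trans lex_le_total lex_le_perm_homo lex_le_anti a.
Qed.

End LevelledOrder.

Theorem proposition4p5 (A : finType) (rx ry : A -> A -> Prop) (s : {perm A}) :
  regular_double_order rx ry ->
  (double_order (tc_union rx (perm_act rx s)) (tc_union ry (perm_act ry s))
   <-> s = 1%g).
Proof.
move=> [dord [[l [h [_ [_ rxE]]]] _]]; have [rx_po [ry_po rxy_total]] := dord.
split=> [[[irr_x _] [[irr_y _] _]] | ->].
- have ry_total_level a b : a <> b -> h a = h b -> ry a b \/ ry b a.
    move=> nab hab.
    by case: (rxy_total a b nab) => [/rxE|[/rxE|//]]; rewrite hab ltnn.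
  have s_level a b : h a < h b -> h (s a) <= h (s b).
    move=> /rxE /(tc_union_irreflexive_no_reversal irr_x) nrx.
    by rewrite leqNgt; apply/negP => /rxE.
  apply/permP => a; rewrite perm1.
  apply: (non_reversing_perm_fix ry_po ry_total_level s_level).
  exact: tc_union_irreflexive_no_reversal.
- by rewrite (tc_union_perm1 rx_po.2) (tc_union_perm1 ry_po.2).
Qed.
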